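(* Let $M=M_1*_NM_2$ be an amalgamated free product of tracial von Neumann algebras $(M_1,\tau_1)$, $(M_2,\tau_2)$ over a common von Neumann subalgebra $N$ with $\tau_1|_N=\tau_2|_N$, and let $E_N:M\to N$ be the trace-preserving conditional expectation. Let $u\in M_2$ be a unitary such that $u-E_N(u)$ is invertible (e.g. if $\|E_N(u)\|<1$). Then $M_1\cap uM_1u^{-1}\subset N$.
   Context: In the amalgamated free product $M_1*_NM_2$, elements of $N$ together with reduced words $x_1\cdots x_k$, where $x_j\in M_{i_j}$, $E_N(x_j)=0$, $i_j\neq i_{j+1}$, span a WOT-dense subspace; in particular $E_{M_1}(y)=E_N(y)$ for $y\in M_2$ and vice versa, and $(M_1\ominus N)(M_2\ominus N)$ is orthogonal to $(M_2\ominus N)(M_1\ominus N)$ in $L^2(M)$. *)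

From HB Require Import structures.
From mathcomp Require Import all_boot all_order all_algebra.
Set Implicit Arguments. Unset Strict Implicit. Unset Printing Implicit Defensive.
Import Order.TTheory GRing.Theory Num.Theory.
Local Open Scope ring_scope.

Section Defs.
Variables (C : numClosedFieldType) (M : algType C).

Definition is_involution (star : M -> M) : Prop :=
  [/\ forall x, star (star x) = x,
      forall x y, star (x + y) = star x + star y,
      forall (a : C) x, star (a *: x) = Num.conj a *: star x
    & forall x y, star (x * y) = star y * star x].

Definition faithful_tracial_state (star : M -> M) (tau : M -> C) : Prop :=
  [/\ forall (a : C) x y, tau (a *: x + y) = a * tau x + tau y,
      tau 1 = 1,
      forall x y, tau (x * y) = tau (y * x),
      forall x, 0 <= tau (star x * x)
    & forall x, tau (star x * x) = 0 -> x = 0].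

Definition star_subalgebra (star : M -> M) (A : pred M) : Prop :=
  [/\ 1 \in A,
      forall x y, x \in A -> y \in A -> x + y \in A,
      forall x y, x \in A -> y \in A -> x * y \in A,
      forall (a : C) x, x \in A -> a *: x \in A
    & forall x, x \in A -> star x \in A].

Definition cond_expectation (star : M -> M) (tau : M -> C) (N : pred M)
  (E : M -> M) : Prop :=
  (forall (a : C) x y, E (a *: x + y) = a *: E x + E y) /\
  [/\ forall x, E x \in N,
      forall x, x \in N -> E x = x,
      forall n1 n2 x, n1 \in N -> n2 \in N -> E (n1 * x * n2) = n1 * E x * n2,
      forall x, E (star x) = star (E x)
    & forall x, tau (E x) = tau x].

(* A word of pairs (i, x), with i = false meaning x in M1, i = true meaning
   x in M2, is reduced if consecutive indices differ and each letter has
   zero conditional expectation. *)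
Definition reduced_word (M1 M2 : pred M) (E : M -> M) (w : seq (bool * M))
  : Prop :=
  [/\ (0 < size w)%N,
      sorted (fun p q : bool * M => p.1 != q.1) w
    & forall p, p \in w -> ((if p.1 then p.2 \in M2 else p.2 \in M1)
                           /\ E p.2 = 0)].

Definition word_prod (w : seq (bool * M)) : M := foldr (fun p m => p.2 * m) 1 w.

Definition free_with_amalgamation (M1 M2 : pred M) (E : M -> M) : Prop :=
  forall w, reduced_word M1 M2 E w -> E (word_prod w) = 0.

End Defs.

From HB Require Import structures.
From mathcomp Require Import all_boot all_order all_algebra.
Import Order.TTheory GRing.Theory Num.Theory.
Set Implicit Arguments. Unset Strict Implicit. Unset Printing Implicit Defensive.
Local Open Scope ring_scope.

(* Write u = u0 + a and x = x0 + x' with u0 = E u, x0 = E x and a, x' centered.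
   From x u = u y one gets x' a = u y - x0 u - x' u0, a sum of elements of
   M2 M1, M2 and M1.  Freeness makes (M1 - N)(M2 - N) orthogonal to each of
   these spaces in L^2(tau), so x' a is orthogonal to itself, hence zero by
   faithfulness; since a is invertible, x' = 0 and x = E x lies in N. *)

Section LinearMap.
Variables (R : pzRingType) (U V : lmodType R) (f : U -> V).
Hypothesis f_linear : forall a x y, f (a *: x + y) = a *: f x + f y.

Lemma linear_mapD x y : f (x + y) = f x + f y.
Proof. by have := f_linear 1 x y; rewrite !scale1r. Qed.

Lemma linear_map0 : f 0 = 0.
Proof. by apply: (addrI (f 0)); rewrite -linear_mapD !addr0. Qed.

Lemma linear_mapB x y : f (x - y) = f x - f y.
Proof. by have := f_linear (-1) y x; rewrite !scaleN1r addrC => ->; rewrite addrC. Qed.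

End LinearMap.

Section StarAlgebra.
Variables (C : numClosedFieldType) (M : algType C) (star : M -> M).

Lemma involution0 : is_involution star -> star 0 = 0.
Proof. by case=> _ starD _ _; apply: (addrI (star 0)); rewrite -starD !addr0. Qed.

Variable A : pred M.
Hypothesis HA : star_subalgebra star A.

Lemma star_subalgebraM x y : x \in A -> y \in A -> x * y \in A.
Proof. by case: HA => _ _ + _ _; apply. Qed.

Lemma star_subalgebraB x y : x \in A -> y \in A -> x - y \in A.
Proof.
case: HA => _ AD _ AZ _ xA yA.
by rewrite AD // -scaleN1r AZ.
Qed.

Lemma star_subalgebra_star x : x \in A -> star x \in A.
Proof. by case: HA => _ _ _ _; apply. Qed.

End StarAlgebra.

Section ConditionalExpectation.
Variables (C : numClosedFieldType) (M : algType C) (star : M -> M)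
  (tau : M -> C) (N : pred M) (E : M -> M).
Hypothesis HE : cond_expectation star tau N E.

Lemma expectation_mem x : E x \in N.
Proof. by case: HE => _ []. Qed.

Lemma expectationB x y : E (x - y) = E x - E y.
Proof. exact: (@linear_mapB _ M M E HE.1). Qed.

Lemma expectation_id x : E (E x) = E x.
Proof. by case: HE => _ [EN Eid _ _ _]; exact: Eid (EN x). Qed.

Lemma expectation_center x : E (x - E x) = 0.
Proof. by rewrite expectationB expectation_id subrr. Qed.

Lemma expectation_star0 x : is_involution star -> E x = 0 -> E (star x) = 0.
Proof. by case: HE => _ [_ _ _ Estar _] /involution0 star0 Ex0; rewrite Estar Ex0. Qed.

Lemma trace_expectation0 x : faithful_tracial_state star tau -> E x = 0 -> tau x = 0.
Proof.
case=> tau_lin _ _ _ _ Ex0; case: HE => _ [_ _ _ _ <-].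
by rewrite Ex0 (@linear_map0 _ _ C^o tau tau_lin).
Qed.

Hypothesis N1 : 1 \in N.

Lemma expectationMr x n : n \in N -> E (x * n) = E x * n.
Proof. by case: HE => _ [_ _ Emul _ _] nN; have := Emul 1 n x N1 nN; rewrite !mul1r. Qed.

Lemma expectationMl x n : n \in N -> E (n * x) = n * E x.
Proof. by case: HE => _ [_ _ Emul _ _] nN; have := Emul n 1 x nN N1; rewrite !mulr1. Qed.

End ConditionalExpectation.

Section AmalgamatedFreeProduct.
Variables (C : numClosedFieldType) (M : algType C) (star : M -> M)
  (tau : M -> C) (M1 M2 N : pred M) (E : M -> M).
Hypotheses (Hstar : is_involution star) (Htau : faithful_tracial_state star tau).
Hypotheses (HM1 : star_subalgebra star M1) (HM2 : star_subalgebra star M2).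
Hypotheses (N1 : 1 \in N) (HNM1 : {subset N <= M1}) (HNM2 : {subset N <= M2}).
Hypotheses (HE : cond_expectation star tau N E)
  (Hfree : free_with_amalgamation M1 M2 E).

Lemma free_expectation_M2M1 p q : p \in M2 -> E p = 0 -> q \in M1 -> E q = 0 ->
  E (p * q) = 0.
Proof.
move=> p2 Ep q1 Eq; have := @Hfree [:: (true, p); (false, q)].
rewrite /word_prod /= mulr1; apply; split=> //= r.
by rewrite !inE => /orP[] /eqP ->.
Qed.

Lemma free_expectation_M2M1M2M1 p q r s :
  p \in M2 -> E p = 0 -> q \in M1 -> E q = 0 ->
  r \in M2 -> E r = 0 -> s \in M1 -> E s = 0 -> E (p * q * r * s) = 0.
Proof.
move=> p2 Ep q1 Eq r2 Er s1 Es.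
have := @Hfree [:: (true, p); (false, q); (true, r); (false, s)].
rewrite /word_prod /= mulr1 !mulrA; apply; split=> //= t.
by rewrite !inE => /or4P[] /eqP ->.
Qed.

Lemma center_M1 x : x \in M1 -> x - E x \in M1.
Proof. by move=> x1; rewrite (star_subalgebraB HM1) // HNM1 // (expectation_mem HE). Qed.

Lemma center_M2 x : x \in M2 -> x - E x \in M2.
Proof. by move=> x2; rewrite (star_subalgebraB HM2) // HNM2 // (expectation_mem HE). Qed.

Lemma expectation_centeredM p q : p \in M2 -> E p = 0 -> q \in M1 ->
  E (p * q) = 0.
Proof.
move=> p2 Ep q1; rewrite -(subrK (E q) q) mulrDr (linear_mapD HE.1).
rewrite (expectationMr HE N1 _ (expectation_mem HE q)) Ep mul0r addr0.
exact: free_expectation_M2M1 p2 Ep (center_M1 q1) (expectation_center HE q).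
Qed.

Lemma expectationM_centered p q : p \in M2 -> q \in M1 -> E q = 0 ->
  E (p * q) = 0.
Proof.
move=> p2 q1 Eq; rewrite -(subrK (E p) p) mulrDl (linear_mapD HE.1).
rewrite (expectationMl HE N1 _ (expectation_mem HE p)) Eq mulr0 addr0.
exact: free_expectation_M2M1 (center_M2 p2) (expectation_center HE p) q1 Eq.
Qed.

Let traceD x y : tau (x + y) = tau x + tau y.
Proof. by case: Htau => tau_lin _ _ _ _; exact: (@linear_mapD _ _ C^o _ tau_lin). Qed.

Let traceB x y : tau (x - y) = tau x - tau y.
Proof. by case: Htau => tau_lin _ _ _ _; exact: (@linear_mapB _ _ C^o _ tau_lin). Qed.

Section CenteredProduct.
Variables c a : M.
Hypotheses (c1 : c \in M1) (Ec : E c = 0) (a2 : a \in M2) (Ea : E a = 0).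

Let star_c1 : star c \in M1 := star_subalgebra_star HM1 c1.
Let star_a2 : star a \in M2 := star_subalgebra_star HM2 a2.
Let E_star_c : E (star c) = 0 := expectation_star0 HE Hstar Ec.
Let E_star_a : E (star a) = 0 := expectation_star0 HE Hstar Ea.

Let star_ca : star (c * a) = star a * star c.
Proof. by case: Hstar. Qed.

Lemma centered_prod_orthoM1 z : z \in M1 -> tau (star (c * a) * z) = 0.
Proof.
move=> z1; rewrite star_ca -mulrA; apply: (trace_expectation0 HE Htau).
by rewrite expectation_centeredM // (star_subalgebraM HM1).
Qed.

Lemma centered_prod_orthoM2 z : z \in M2 -> tau (star (c * a) * z) = 0.
Proof.
move=> z2; case: Htau => _ _ tauC _ _.
rewrite star_ca tauC mulrA; apply: (trace_expectation0 HE Htau).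
by rewrite expectationM_centered // (star_subalgebraM HM2).
Qed.

Lemma centered_prod_orthoM2M1 p y : p \in M2 -> y \in M1 ->
  tau (star (c * a) * (p * y)) = 0.
Proof.
move=> p2 y1; rewrite -(subrK (E p) p) mulrDl mulrDr traceD.
rewrite [X in _ + X]centered_prod_orthoM1 ?addr0; last first.
  by rewrite (star_subalgebraM HM1) // HNM1 // (expectation_mem HE).
rewrite -(subrK (E y) y) mulrDr mulrDr traceD.
rewrite [X in _ + X]centered_prod_orthoM2 ?addr0; last first.
  by rewrite (star_subalgebraM HM2) ?center_M2 // HNM2 // (expectation_mem HE).
rewrite star_ca !mulrA; apply: (trace_expectation0 HE Htau).
by apply: free_expectation_M2M1M2M1;
  rewrite ?center_M1 ?center_M2 ?(expectation_center HE).
Qed.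

Lemma centered_prod_eq0 p y q m : p \in M2 -> y \in M1 -> q \in M2 -> m \in M1 ->
  c * a = p * y - q - m -> c * a = 0.
Proof.
move=> p2 y1 q2 m1 eq_ca; case: Htau => _ _ _ _; apply.
rewrite {2}eq_ca !mulrBr !traceB centered_prod_orthoM2M1 //.
by rewrite centered_prod_orthoM2 // centered_prod_orthoM1 // !subr0.
Qed.

End CenteredProduct.
End AmalgamatedFreeProduct.

Theorem lemma2p1 (C : numClosedFieldType) (M : algType C)
  (star : M -> M) (tau : M -> C) (M1 M2 N : pred M) (E : M -> M)
  (Hstar : is_involution star)
  (Htau : faithful_tracial_state star tau)
  (HM1 : star_subalgebra star M1) (HM2 : star_subalgebra star M2)
  (HN : star_subalgebra star N)
  (HNM1 : {subset N <= M1}) (HNM2 : {subset N <= M2})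
  (HE : cond_expectation star tau N E)
  (Hfree : free_with_amalgamation M1 M2 E)
  (u : M) (Hu2 : u \in M2) (Hunit : star u * u = 1 /\ u * star u = 1)
  (Hinv : exists v : M, v * (u - E u) = 1 /\ (u - E u) * v = 1) :
  forall x : M, x \in M1 -> (exists2 y : M, y \in M1 & x = u * y * star u) ->
    x \in N.
Proof.
move=> x x1 [y y1 def_x].
have N1 : 1 \in N by case: HN.
have center1 := center_M1 HM1 HNM1 HE; have center2 := center_M2 HM2 HNM2 HE.
have xu : x * u = u * y by rewrite def_x -mulrA Hunit.1 mulr1.
have eq_x'a : (x - E x) * (u - E u) = u * y - E x * u - (x - E x) * E u.
  by rewrite mulrBr mulrBl xu.
have Ex_N := expectation_mem HE x; have Eu_N := expectation_mem HE u.
have x'a0 : (x - E x) * (u - E u) = 0.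
  apply: (centered_prod_eq0 Hstar Htau HM1 HM2 N1 HNM1 HNM2 HE Hfree
            (center1 _ x1) (expectation_center HE x) (center2 _ Hu2)
            (expectation_center HE u) Hu2 y1 _ _ eq_x'a).
    exact: (star_subalgebraM HM2) (HNM2 _ Ex_N) Hu2.
  exact: (star_subalgebraM HM1) (center1 _ x1) (HNM1 _ Eu_N).
have [v [_ av]] := Hinv.
have x'0 : x - E x = 0 by rewrite -[x - E x]mulr1 -av mulrA x'a0 mul0r.
by rewrite -(subrK (E x) x) x'0 add0r.
Qed.
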